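(* Let $(\mathbb{X},d,\mu)$ be a metric measure space such that $\mu$ is ring-continuous. Let $\Omega\subset\mathbb{X}$ be a domain and $\varrho$ a continuous admissible radius function in $\Omega$. Then $\mathcal{M}$ maps $L^\infty(\Omega)$ into $C(\Omega)$.
   Context: A metric measure space $(\mathbb{X},d,\mu)$ is a metric space with a positive Borel regular measure $\mu$ with $0<\mu(B)<\infty$ for every ball $B$. $\mu$ is ring-continuous if for each $x\in\mathbb{X}$ the function $r\mapsto\mu(B(x,r))$ is continuous on $(0,\infty)$. An admissible radius function in $\Omega$ is $\varrho\in C(\overline\Omega)$, $\varrho\ge0$, with $0<\varrho(x)\leq\mathrm{dist}(x,\partial\Omega)$ for $x\in\Omega$ and $\varrho=0$ exactly on $\partial\Omega$. For $x\in\Omega$, $B_x=\overline{B}(x,\varrho(x))$ and $\mathcal{M}u(x)=\frac{1}{\mu(B_x)}\int_{B_x}u\,d\mu$. *)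

From HB Require Import structures.
From mathcomp Require Import all_boot all_order all_algebra.
From mathcomp Require Import all_classical all_reals all_analysis.
Set Implicit Arguments. Unset Strict Implicit. Unset Printing Implicit Defensive.
Import Order.TTheory GRing.Theory Num.Theory.
Local Open Scope classical_set_scope.
Local Open Scope ring_scope.

Section MMS.
Context {d : measure_display} {X : measurableType d} {R : realType}.
Variable dist : X -> X -> R.

Definition is_metric : Prop :=
  (forall x y, 0 <= dist x y) /\ (forall x y, dist x y = 0 <-> x = y) /\
  (forall x y, dist x y = dist y x) /\
  (forall x y z, dist x z <= dist x y + dist y z).

Definition oball (x : X) (r : R) : set X := [set y | dist x y < r].
Definition cball (x : X) (r : R) : set X := [set y | dist x y <= r].

Definition d_open (A : set X) : Prop :=
  forall x, A x -> exists2 r : R, 0 < r & oball x r `<=` A.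

Definition d_closure (A : set X) : set X :=
  [set x | forall r : R, 0 < r -> exists2 y, A y & dist x y < r].

Definition d_interior (A : set X) : set X :=
  [set x | exists2 r : R, 0 < r & oball x r `<=` A].

Definition d_boundary (A : set X) : set X := d_closure A `\` d_interior A.

(* connected: not the union of two disjoint nonempty open subsets of A
   (relatively open sets of A are the traces U `&` A of open sets U) *)
Definition d_connected (A : set X) : Prop :=
  forall U V : set X, d_open U -> d_open V ->
    A `<=` U `|` V -> U `&` V `&` A = set0 ->
    U `&` A = set0 \/ V `&` A = set0.

Definition d_domain (A : set X) : Prop :=
  d_open A /\ d_connected A /\ A !=set0.

Definition d_continuous_on (A : set X) (f : X -> R) : Prop :=
  forall x, A x -> forall e : R, 0 < e -> exists2 del : R, 0 < del &
    forall y, A y -> dist x y < del -> `|f y - f x| < e.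

(* (X, dist, mu) is a metric measure space: every Borel set is measurable
   (equivalently every open set is), and balls have positive finite measure *)
Definition metric_measure_space (mu : {measure set X -> \bar R}) : Prop :=
  is_metric /\ (forall A, d_open A -> measurable A) /\
  (forall x (r : R), 0 < r -> (0 < mu (oball x r))%E /\ (mu (oball x r) < +oo)%E).

Definition ring_continuous (mu : {measure set X -> \bar R}) : Prop :=
  forall x (r : R), 0 < r -> forall e : R, 0 < e -> exists2 del : R, 0 < del &
    forall s : R, 0 < s -> `|s - r| < del ->
      `|fine (mu (oball x s)) - fine (mu (oball x r))| < e.

Definition admissible_radius (Omega : set X) (rho : X -> R) : Prop :=
  d_continuous_on (d_closure Omega) rho /\
  (forall x, d_closure Omega x -> 0 <= rho x) /\
  (forall x, Omega x -> 0 < rho x /\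
     (* rho x <= dist(x, boundary Omega), i.e. below every boundary distance *)
     forall y, d_boundary Omega y -> rho x <= dist x y) /\
  (forall x, d_closure Omega x -> (rho x = 0 <-> d_boundary Omega x)).

Definition Linfty (mu : {measure set X -> \bar R}) (Omega : set X) (u : X -> R)
  : Prop :=
  measurable_fun Omega u /\
  exists M : R, {ae mu, forall x, Omega x -> `|u x| <= M}.

(* B_x = closed ball of radius rho x; u is taken to vanish outside Omega *)
Definition Bx (rho : X -> R) (x : X) : set X := cball x (rho x).

Definition mean_op (mu : {measure set X -> \bar R}) (Omega : set X)
  (rho : X -> R) (u : X -> R) (x : X) : R :=
  fine (\int[mu]_(y in Bx rho x `&` Omega) (u y)%:E) / fine (mu (Bx rho x)).

End MMS.

From mathcomp Require Import all_boot all_order all_algebra.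
From mathcomp Require Import all_classical all_reals all_analysis.
From mathcomp Require Import measurable_realfun ring lra.
Import Order.TTheory GRing.Theory Num.Theory.
Local Open Scope classical_set_scope.
Local Open Scope ring_scope.

(* For y close to x, continuity of rho squeezes both closed balls B_x and B_y
   between the open balls B(x, rho x - t) and B(x, rho x + t).  As |u| <= M
   a.e., the integrals of u over B_x and B_y then differ by at most 2M times
   the measure of this annulus, and the measures of B_x and B_y by at most the
   measure of the annulus itself.  Ring-continuity makes the annulus measure
   arbitrarily small, and the quotient is continuous since mu(B_x) > 0. *)

Section Metric.
Context {d : measure_display} {X : measurableType d} {R : realType}.
Context {dist : X -> X -> R}.
Hypothesis dist_metric : is_metric dist.

Lemma in_d_closure {A : set X} {x : X} : A x -> d_closure dist A x.
Proof.
case: dist_metric => _ [dE _] Ax r r0.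
by exists x => //; rewrite (proj2 (dE x x)).
Qed.

Lemma d_open_oball x r : d_open dist (oball dist x r).
Proof.
case: dist_metric => _ [_ [_ dT]] y; rewrite /oball /= => xy.
exists (r - dist x y); first by rewrite subr_gt0.
by move=> z /= yz; have := dT x y z; lra.
Qed.

Lemma d_open_setC_cball x r : d_open dist (~` cball dist x r).
Proof.
case: dist_metric => _ [_ [dC dT]] y; rewrite /cball /= => /negP.
rewrite -ltNge => xy; exists (dist x y - r); first by rewrite subr_gt0.
move=> z; rewrite /oball /= => yz; apply/negP; rewrite -ltNge.
by have := dT x z y; rewrite (dC z y); lra.
Qed.

Lemma cball_sandwich {x y : X} {r s t : R} : dist x y + `|s - r| < t ->
  oball dist x (r - t) `<=` cball dist y s /\
  cball dist y s `<=` oball dist x (r + t).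
Proof.
case: dist_metric => _ [_ [dC dT]].
rewrite -ltrBrDl => /[dup] /ltr_normlW + /ltr_distlCBl.
split=> z; rewrite /oball /cball /=.
  by have := dT y x z; rewrite (dC y x); lra.
by have := dT x y z; lra.
Qed.

End Metric.

Section MetricMeasureSpace.
Context {d : measure_display} {X : measurableType d} {R : realType}.
Context {dist : X -> X -> R} {mu : {measure set X -> \bar R}}.
Hypothesis mms : metric_measure_space dist mu.

Lemma measurable_oball x r : measurable (oball dist x r).
Proof. by case: mms => dm [+ _]; apply; exact: d_open_oball. Qed.

Lemma measurable_cball x r : measurable (cball dist x r).
Proof.
case: mms => dm [mopen _]; rewrite -[cball _ _ _]setCK.
by apply: measurableC; apply: mopen; exact: d_open_setC_cball.
Qed.

Lemma cball_measure_lty x r : (mu (cball dist x r) < +oo)%E.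
Proof.
case: mms => _ [_ mball].
apply: (le_lt_trans (le_measure _ _ _ _)) (proj2 (mball x (`|r| + 1) _)).
- by rewrite inE; exact: measurable_cball.
- by rewrite inE; exact: measurable_oball.
- move=> y; rewrite /cball /oball /= => xy.
  by apply: le_lt_trans xy _; rewrite ltr_pwDr // ler_norm.
- by rewrite ltr_pwDr.
Qed.

Lemma cball_fine_measure_gt0 x r : 0 < r -> 0 < fine (mu (cball dist x r)).
Proof.
case: mms => _ [_ mball] r0; apply: fine_gt0; rewrite cball_measure_lty andbT.
apply: (lt_le_trans (proj1 (mball x r r0))); apply: le_measure.
- by rewrite inE; exact: measurable_oball.
- by rewrite inE; exact: measurable_cball.
- by move=> y /ltW.
Qed.

End MetricMeasureSpace.

Section BoundedIntegral.
Context {d : measure_display} {T : measurableType d} {R : realType}.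
Context {mu : {measure set T -> \bar R}} {D : set T} {f : T -> R} {M : R}.
Hypotheses (mD : measurable D) (mf : measurable_fun D f) (M0 : 0 <= M).
Hypothesis f_le_M : {ae mu, forall x, D x -> `|f x| <= M}.

Lemma integral_abs_le_bound E : measurable E -> E `<=` D ->
  (\int[mu]_(x in E) `|(f x)%:E| <= M%:E * mu E)%E.
Proof.
move=> mE ED; apply: (integral_le_bound M%:E) => //.
- by apply/measurable_EFinP; exact: measurable_funS mf.
- by apply: filterS f_le_M => x fx Ex; rewrite lee_fin; exact: fx (ED _ Ex).
Qed.

Lemma ae_bounded_integrable E : measurable E -> E `<=` D -> (mu E < +oo)%E ->
  mu.-integrable E (EFin \o f).
Proof.
move=> mE ED Efin; apply/integrableP; split.
  by apply/measurable_EFinP; exact: measurable_funS mf.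
apply: le_lt_trans (integral_abs_le_bound _ mE ED) _.
have Efin_num : mu E \is a fin_num by rewrite ge0_fin_numE.
by rewrite -(fineK Efin_num) -EFinM ltry.
Qed.

Lemma norm_Rintegral_le E : measurable E -> E `<=` D -> (mu E < +oo)%E ->
  `|Rintegral mu E f| <= M * fine (mu E).
Proof.
move=> mE ED Efin; rewrite -lee_fin EFin_normr_Rintegral //; last first.
  exact: ae_bounded_integrable.
apply: le_trans (le_abse_integral _ _ _) _ => //.
  by apply/measurable_EFinP; exact: measurable_funS mf.
by rewrite EFinM fineK ?ge0_fin_numE //; exact: integral_abs_le_bound.
Qed.

Lemma Rintegral_sandwich_inner {S A B : set T} :
  measurable S -> measurable A -> measurable B ->
  S `<=` A -> A `<=` B -> (mu B < +oo)%E ->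
  `|Rintegral mu (A `&` D) f - Rintegral mu (S `&` D) f| <=
  M * (fine (mu B) - fine (mu S)).
Proof.
move=> mS mA mB SA AB Bfin.
have mSD : measurable (S `&` D) by exact: measurableI.
have mAS : measurable ((A `\` S) `&` D).
  by apply: measurableI => //; exact: measurableD.
have sub_lty E : measurable E -> E `<=` B -> (mu E < +oo)%E.
  by move=> mE EB; apply: le_lt_trans Bfin; apply: le_measure; rewrite ?inE.
have ASfin : (mu ((A `\` S) `&` D) < +oo)%E.
  by apply: sub_lty => // x [[/AB]].
have ASD : A `&` D = (S `&` D) `|` ((A `\` S) `&` D).
  apply/seteqP; split=> x /=.
    by move=> [Ax Dx]; case: (pselect (S x)) => Sx; [left|right].
  by case=> -[+ Dx]; [move=> /SA|case].
rewrite ASD Rintegral_setU //; last first.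
- by apply/disj_setPS => x [[+ _] [[_ +] _]].
- rewrite -ASD; apply: ae_bounded_integrable => //; first exact: measurableI.
  by apply: sub_lty; [exact: measurableI | move=> x [/AB]].
rewrite addrAC subrr add0r.
apply: le_trans (norm_Rintegral_le _ mAS (@subIsetr _ _ _) ASfin) _.
apply: ler_wpM2l => //.
have -> : fine (mu B) - fine (mu S) = fine (mu (B `\` S)).
  rewrite measureD // setIidr; last exact: subset_trans SA AB.
  rewrite fineB // ge0_fin_numE //.
  by apply: sub_lty => //; exact: subset_trans SA AB.
have mBS : measurable (B `\` S) by exact: measurableD.
apply: fine_le; rewrite ?ge0_fin_numE //; first by apply: sub_lty => // x [].
by apply: le_measure; rewrite ?inE // => x [[/AB]].
Qed.

Lemma Rintegral_sandwich {S A A' B : set T} :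
  measurable S -> measurable A -> measurable A' -> measurable B ->
  S `<=` A -> A `<=` B -> S `<=` A' -> A' `<=` B -> (mu B < +oo)%E ->
  `|Rintegral mu (A `&` D) f - Rintegral mu (A' `&` D) f| <=
  2 * (M * (fine (mu B) - fine (mu S))).
Proof.
move=> mS mA mA' mB SA AB SA' A'B Bfin.
rewrite -(subrKA (Rintegral mu (S `&` D) f)) mulr2n mulrDl mul1r.
apply: le_trans (ler_normD _ _) _; rewrite [X in _ + X]distrC.
by apply: lerD; exact: Rintegral_sandwich_inner.
Qed.

End BoundedIntegral.

Lemma fine_measure_sandwich {d : measure_display} {T : measurableType d}
    {R : realType} {mu : {measure set T -> \bar R}} {S A A' B : set T} :
  measurable S -> measurable A -> measurable A' -> measurable B ->
  S `<=` A -> A `<=` B -> S `<=` A' -> A' `<=` B -> (mu B < +oo)%E ->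
  `|fine (mu A) - fine (mu A')| <= fine (mu B) - fine (mu S).
Proof.
move=> mS mA mA' mB SA AB SA' A'B Bfin.
have between E : measurable E -> S `<=` E -> E `<=` B ->
    fine (mu S) <= fine (mu E) <= fine (mu B).
  move=> mE SE EB; have Efin : (mu E < +oo)%E.
    by apply: le_lt_trans Bfin; apply: le_measure; rewrite ?inE.
  have Sfin : (mu S < +oo)%E.
    by apply: le_lt_trans Efin; apply: le_measure; rewrite ?inE.
  by apply/andP; split; apply: fine_le; rewrite ?ge0_fin_numE //;
    apply: le_measure; rewrite ?inE.
have /andP[SA1 AB1] := between _ mA SA AB.
have /andP[SA2 AB2] := between _ mA' SA' A'B.
by rewrite ler_norml; apply/andP; split; lra.
Qed.

Section CballMeans.
Context {d : measure_display} {X : measurableType d} {R : realType}.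
Context {dist : X -> X -> R} {mu : {measure set X -> \bar R}}.
Context {D : set X} {f : X -> R} {M : R}.
Hypotheses (mms : metric_measure_space dist mu) (mD : measurable D).
Hypotheses (mf : measurable_fun D f) (M0 : 0 <= M).
Hypothesis f_le_M : {ae mu, forall x, D x -> `|f x| <= M}.

Lemma cball_means_close {x y : X} {r s t w : R} :
  0 < t -> dist x y + `|s - r| < t ->
  fine (mu (oball dist x (r + t))) - fine (mu (oball dist x (r - t))) <= w ->
  `|Rintegral mu (cball dist y s `&` D) f -
    Rintegral mu (cball dist x r `&` D) f| <= 2 * (M * w) /\
  `|fine (mu (cball dist y s)) - fine (mu (cball dist x r))| <= w.
Proof.
have dm := mms.1; move=> t0 close_y annulus.
have close_x : dist x x + `|r - r| < t.
  by rewrite (proj2 (dm.2.1 x x)) // subrr normr0 addr0.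
have [SBy ByB] := cball_sandwich dm close_y.
have [SBx BxB] := cball_sandwich dm close_x.
have mS := measurable_oball mms x (r - t).
have mB := measurable_oball mms x (r + t).
have mBx := measurable_cball mms x r.
have mBy := measurable_cball mms y s.
have Bfin : (mu (oball dist x (r + t)) < +oo)%E.
  apply: le_lt_trans (cball_measure_lty mms x (r + t)).
  apply: le_measure; rewrite ?inE //; last by move=> z /ltW.
  exact: measurable_cball mms x (r + t).
split.
- apply: le_trans (Rintegral_sandwich mD mf M0 f_le_M
    mS mBy mBx mB SBy ByB SBx BxB Bfin) _.
  by rewrite ler_pM2l // ler_wpM2l.
- apply: le_trans annulus.
  exact: fine_measure_sandwich mS mBy mBx mB SBy ByB SBx BxB Bfin.
Qed.

End CballMeans.

Lemma div_continuous_eps {R : realType} (a : R) {b e : R} : 0 < b -> 0 < e ->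
  exists2 eta : R, 0 < eta & forall a' b',
    `|a' - a| <= eta -> `|b' - b| <= eta -> `|a' / b' - a / b| < e.
Proof.
move=> b0 e0; have c0 : 0 < 4 * (`|a| + b) by rewrite mulr_gt0 // ltr_wpDl.
pose k := e * b * b / (4 * (`|a| + b)).
have k0 : 0 < k by rewrite divr_gt0 // !mulr_gt0.
have kE : k * (4 * (`|a| + b)) = e * b * b by rewrite mulfVK // gt_eqF.
exists (Num.min (b / 2) k); first by rewrite lt_min k0 andbT divr_gt0.
move=> a' b'; rewrite !le_min => /andP[_ ak] /andP[bb bk].
have b'_ge : b / 2 <= b' by move: bb; rewrite ler_norml => /andP[? _]; lra.
have b'0 : 0 < b' by apply: lt_le_trans b'_ge; rewrite divr_gt0.
have -> : a' / b' - a / b = ((a' - a) * b - a * (b' - b)) / (b' * b).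
  by field; rewrite !gt_eqF.
rewrite normrM normfV (gtr0_norm (mulr_gt0 b'0 b0)) ltr_pdivrMr ?mulr_gt0 //.
have num_le : `|(a' - a) * b - a * (b' - b)| <= k * (`|a| + b).
  apply: le_trans (ler_normB _ _) _; rewrite !normrM (gtr0_norm b0).
  by have := normr_ge0 a; have := normr_ge0 (a' - a); nra.
apply: le_lt_trans num_le _.
have : 0 < e * b by rewrite mulr_gt0.
nra.
Qed.

Lemma ring_continuous_annulus {d : measure_display} {X : measurableType d}
    {R : realType} {dist : X -> X -> R} {mu : {measure set X -> \bar R}}
    (x : X) (r e : R) :
  ring_continuous dist mu -> 0 < r -> 0 < e -> exists2 t : R, 0 < t &
    fine (mu (oball dist x (r + t))) - fine (mu (oball dist x (r - t))) < e.
Proof.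
move=> rc r0 e0.
have [del del0 near_r] := rc x r r0 (e / 2) (divr_gt0 e0 (ltr0Sn _ 1)).
pose t := Num.min (del / 2) (r / 2).
have [t_del t_r] : t <= del / 2 /\ t <= r / 2 by rewrite !ge_min !lexx orbT.
have t0 : 0 < t by rewrite lt_min !divr_gt0.
exists t => //.
have hB : `|fine (mu (oball dist x (r + t))) - fine (mu (oball dist x r))| < e / 2.
  by apply: near_r; [lra | rewrite ltr_norml; apply/andP; split; lra].
have hS : `|fine (mu (oball dist x (r - t))) - fine (mu (oball dist x r))| < e / 2.
  by apply: near_r; [lra | rewrite ltr_norml; apply/andP; split; lra].
by move: hB hS; rewrite !ltr_norml => /andP[_ ?] /andP[? _]; lra.
Qed.

Lemma Linfty_ae_bound {d : measure_display} {X : measurableType d}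
    {R : realType} {mu : {measure set X -> \bar R}} {Omega : set X} {u : X -> R} :
  Linfty mu Omega u ->
  exists2 M : R, 0 <= M & {ae mu, forall x, Omega x -> `|u x| <= M}.
Proof.
case=> _ [M uM]; exists (Num.max M 0); first by rewrite le_max lexx orbT.
by apply: filterS uM => x uMx Ox; rewrite le_max uMx.
Qed.

Theorem proposition3p4 (d : measure_display) (X : measurableType d)
  (R : realType) (dist : X -> X -> R) (mu : {measure set X -> \bar R})
  (Omega : set X) (rho : X -> R) :
  metric_measure_space dist mu ->
  ring_continuous dist mu ->
  d_domain dist Omega ->
  admissible_radius dist Omega rho ->
  forall u : X -> R, Linfty mu Omega u ->
    d_continuous_on dist Omega (mean_op dist mu Omega rho u).
Proof.
move=> mms rc [Oopen _] [rho_cont [_ [rho_pos _]]] u uL x Ox e e0.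
have mOmega := mms.2.1 _ Oopen.
have [M M0 uM] := Linfty_ae_bound uL.
have rx0 := (rho_pos x Ox).1.
have [eta eta0 mean_near] := div_continuous_eps
  (Rintegral mu (cball dist x (rho x) `&` Omega) u)
  (cball_fine_measure_gt0 mms x (rho x) rx0) e0.
pose w := eta / (2 * M + 1).
have w0 : 0 < w by rewrite divr_gt0 // ltr_wpDl // mulr_ge0.
have [w_eta Mw_eta] : w <= eta /\ 2 * (M * w) <= eta.
  have : w * (2 * M + 1) = eta by rewrite mulfVK // gt_eqF // ltr_wpDl ?mulr_ge0.
  by split; nra.
have [t t0 /ltW annulus] := ring_continuous_annulus x (rho x) w rc rx0 w0.
have [del del0 rho_near] :=
  rho_cont x (in_d_closure mms.1 Ox) (t / 2) (divr_gt0 t0 (ltr0Sn _ 1)).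
exists (Num.min del (t / 2)); first by rewrite lt_min del0 divr_gt0.
move=> y Oy; rewrite lt_min => /andP[xy_del xy_t].
have rho_y := rho_near y (in_d_closure mms.1 Oy) xy_del.
have close : dist x y + `|rho y - rho x| < t by lra.
have [I_close m_close] :=
  cball_means_close mms mOmega uL.1 M0 uM t0 close annulus.
apply: mean_near; [exact: le_trans Mw_eta | exact: le_trans w_eta].
Qed.
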